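(* Let $(X,d)$ be a complete metric space and $(\mathbb{H}(X),h)$ the space of nonempty compact subsets of $X$ with the Hausdorff metric. For each $i\in\mathbb{N}$ let $\mathcal{F}_i=\{X; f_{1,i},\dots,f_{n_i,i}\}$ be a family of Lipschitz maps $f_{r,i}:X\to X$ with set map $\mathcal{F}_i(A)=\bigcup_{r=1}^{n_i} f_{r,i}(A)$ and $L_{\mathcal{F}_i}=\max_r\mathrm{Lip}(f_{r,i})$, where $\lim_{k\to\infty}\prod_{i=1}^kL_{\mathcal{F}_i}=0$. Assume there exists a compact set $C\subseteq X$ with $f_{r,i}(C)\subseteq C$ for all $r=1,\dots,n_i$, $i\in\mathbb{N}$, and assume $\sum_{k=1}^\infty\prod_{i=1}^k L_{\mathcal{F}_i}<\infty$. Then there is a unique set $P\subseteq C$ such that for every nonempty compact $A\subseteq C$, the backward trajectory $\Psi_k(A)=\mathcal{F}_1\circ\mathcal{F}_2\circ\cdots\circ\mathcal{F}_k(A)$ converges to $P$ in $(\mathbb{H}(X),h)$.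
   Context: The Hausdorff metric is $h(B,C)=\max\{d(B,C),d(C,B)\}$ with $d(B,C)=\sup_{b\in B}\inf_{c\in C}d(b,c)$. *)

From HB Require Import structures.
From mathcomp Require Import all_boot all_order all_algebra.
From mathcomp Require Import all_classical all_reals all_analysis.
Set Implicit Arguments. Unset Strict Implicit. Unset Printing Implicit Defensive.
Import Order.TTheory GRing.Theory Num.Theory numFieldTopology.Exports numFieldNormedType.Exports.
Local Open Scope classical_set_scope.
Local Open Scope ring_scope.

Definition complete_space (X : uniformType) : Prop :=
  forall F : set_system X, ProperFilter F -> cauchy F -> exists x : X, F --> x.

Definition lipschitz_with (R : realType) (X : metricType R) (L : R) (f : X -> X) :=
  forall x y : X, mdist (f x) (f y) <= L * mdist x y.

Definition lip_const (R : realType) (X : metricType R) (f : X -> X) : R :=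
  inf [set L : R | 0 <= L /\ lipschitz_with L f].

Definition hdist (R : realType) (X : metricType R) (B C : set X) : R :=
  sup [set inf [set mdist b c | c in C] | b in B].

Definition hausdorff (R : realType) (X : metricType R) (B C : set X) : R :=
  Num.max (hdist B C) (hdist C B).

Definition in_HX (R : realType) (X : metricType R) (A : set X) : Prop :=
  A !=set0 /\ compact A.

Definition cvg_H (R : realType) (X : metricType R) (S : nat -> set X) (P : set X) : Prop :=
  in_HX P /\ (fun k => hausdorff (S k) P) @ \oo --> (0 : R).

(* set map F_i(A) = \bigcup_{r < n_i} f_{r,i}(A)  (indices shifted to start at 0) *)
Definition Fset (R : realType) (X : metricType R) (n : nat -> nat)
  (f : nat -> nat -> X -> X) (i : nat) (A : set X) : set X :=
  \bigcup_(r in [set r : nat | (r < n i)%N]) (f i r @` A).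

Definition LF (R : realType) (X : metricType R) (n : nat -> nat)
  (f : nat -> nat -> X -> X) (i : nat) : R :=
  \big[Num.max/0]_(r < n i) lip_const (f i r).

Definition Psi (R : realType) (X : metricType R) (n : nat -> nat)
  (f : nat -> nat -> X -> X) (k : nat) (A : set X) : set X :=
  foldr (fun i S => Fset n f i S) A (iota 0 k).

(* Let D bound the diameter of C and p_k = L_{F_1} ... L_{F_k}.  For nonempty
   A, B included in C, every point of Psi_k(A) lies within p_k D of Psi_k(B),
   because Psi_k(A) and Psi_k(B) are images of points at distance at most D
   under the same compositions of maps.  Since F_i(C) is included in C, the
   sets Psi_k(C) decrease, and the limit is P = \bigcap_k closure (Psi_k(C)):
   a point of Psi_k(A) is within p_k D of Psi_(k+j)(C) for every j, so a
   cluster point of such approximants (which exists by compactness of C) lies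
   in P at distance at most p_k D; conversely every point of P is as close as
   we like to Psi_k(C), hence within p_k D of Psi_k(A).  Thus
   h(Psi_k(A), P) <= p_k D -> 0, and P is unique because two closed sets that
   are Hausdorff limits of the same sequence coincide. *)

From HB Require Import structures.
From mathcomp Require Import all_boot all_order all_algebra.
From mathcomp Require Import all_classical all_reals all_analysis.
From mathcomp Require Import lra.
Import Order.TTheory GRing.Theory Num.Theory numFieldTopology.Exports numFieldNormedType.Exports.
Local Open Scope classical_set_scope.
Local Open Scope ring_scope.
Set Implicit Arguments. Unset Strict Implicit.

Section MetricSets.
Context {R : realType} {X : metricType R}.
Implicit Types (A B K P Q : set X) (e D : R).

Definition within e A B := forall a, A a -> exists2 b, B b & mdist a b <= e.

Definition diam_le D K := forall x y, K x -> K y -> mdist x y <= D.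

Lemma withinW e e' A B : e <= e' -> within e A B -> within e' A B.
Proof.
by move=> ee' AB a /AB[b Bb ab]; exists b => //; apply: le_trans ee'.
Qed.

Lemma compact_diam_le K : compact K -> exists D, diam_le D K.
Proof.
move=> cK; have [->|/set0P[x0 Kx0]] := eqVneq K set0.
  by exists 0 => x y [].
have : \forall M \near +oo, K `<=` [set y | mdist x0 y < M].
  have := (compact_near_coveringP K).1 cK R (pinfty_nbhs R)
    (fun M y => mdist x0 y < M) _.
  apply => x Kx.
  exists (ball x 1, [set M | mdist x0 x + 1 < M]); first split => /=.
  - exact: nbhsx_ballx.
  - by apply: nbhs_pinfty_gt; rewrite num_real.
  move=> [y M] /= [xy xM]; rewrite ballEmdist /= in xy.
  by have := metric_triangle x0 x y; lra.
case/filter_ex => M KM; exists (M + M).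
move=> x y Kx Ky; have := metric_triangle x x0 y; rewrite (metric_sym x x0).
by have := KM x Kx; have := KM y Ky; rewrite /=; lra.
Qed.

Lemma cluster_mdist_le (F : set_system X) (s x : X) r :
  F [set y | mdist s y <= r] -> cluster F x -> mdist s x <= r.
Proof.
move=> Fr Fx; apply/ler_addgt0Pr => e e0.
have [y [/= sy]] := Fx _ _ Fr (nbhsx_ballx x e e0).
rewrite ballEmdist /= => xy.
by have := metric_triangle s y x; rewrite (metric_sym y x); lra.
Qed.

(* [sup] and [inf] are 0 on empty or unbounded sets: hence no hypothesis in the
   two lemmas below, but a boundedness hypothesis in [hdist_lt]. *)
Lemma inf_mdist_ge0 (a : X) B : 0 <= inf [set mdist a b | b in B].
Proof.
have [->|/set0P[b Bb]] := eqVneq B set0; first by rewrite image_set0 inf0.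
apply: lb_le_inf; first by exists (mdist a b), b.
by move=> _ [c _ <-]; exact: mdist_ge0.
Qed.

Lemma hdist_ge0 A B : 0 <= hdist A B.
Proof.
rewrite /hdist; have [->|/set0P[a Aa]] := eqVneq A set0.
  by rewrite image_set0 sup0.
set S := [set inf _ | b in A]; have [ub|nub] := pselect (has_ubound S).
  by apply: le_trans (inf_mdist_ge0 a B) _; apply: ub_le_sup => //; exists a.
by rewrite sup_out // => -[].
Qed.

Lemma hdist_le e A B : A !=set0 ->
  (forall d, 0 < d -> within (e + d) A B) -> hdist A B <= e.
Proof.
move=> [a0 Aa0] AB; apply: ge_sup.
  by exists (inf [set mdist a0 b | b in B]), a0.
move=> _ [a Aa <-]; apply/ler_addgt0Pr => d d0.
have [b Bb abd] := AB d d0 a Aa.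
apply: le_trans abd; apply: ge_inf; last by exists b.
by exists 0 => _ [c _ <-]; exact: mdist_ge0.
Qed.

Lemma hdist_lt D K e A B a : diam_le D K -> A `<=` K -> B `<=` K -> B !=set0 ->
  A a -> hdist A B < e -> exists2 b, B b & mdist a b < e.
Proof.
move=> KD AK BK [b0 Bb0] Aa ABe.
have : inf [set mdist a b | b in B] < e.
  apply: le_lt_trans ABe; apply: ub_le_sup; last by exists a.
  exists D => _ [x Ax <-]; apply: le_trans (KD x b0 (AK x Ax) (BK b0 Bb0)).
  by apply: ge_inf; [exists 0 => _ [c _ <-]; exact: mdist_ge0 | exists b0].
by case/inf_lt => [|_ [b Bb <-]]; [exists (mdist a b0), b0 | exists b].
Qed.

Lemma hausdorff_ge0 A B : 0 <= hausdorff A B.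
Proof. by rewrite le_max hdist_ge0. Qed.

Lemma hausdorff_le e A B : A !=set0 ->
    (forall d, 0 < d -> within (e + d) A B) ->
    (forall d, 0 < d -> within (e + d) B A) ->
  hausdorff A B <= e.
Proof.
move=> [a Aa] AB BA; have [b Bb _] := AB 1 ltr01 a Aa.
by rewrite ge_max !hdist_le //; [exists b | exists a].
Qed.

Lemma hausdorff_limit_sub D K (S : nat -> set X) P Q :
    diam_le D K -> (forall k, S k `<=` K) -> (forall k, S k !=set0) ->
    P `<=` K -> Q `<=` K -> Q !=set0 -> closed Q ->
    (fun k => hausdorff (S k) P) @ \oo --> 0 ->
    (fun k => hausdorff (S k) Q) @ \oo --> 0 ->
  P `<=` Q.
Proof.
move=> KD SK S0 PK QK Q0 Qcl SP SQ x Px.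
apply: Qcl => U /nbhs_ballP[e e0 xeU].
have e20 : 0 < e / 2 by rewrite divr_gt0.
near \oo => k.
have /andP[_ PSk] : (hdist (S k) P < e / 2) && (hdist P (S k) < e / 2).
  by rewrite -gt_max; near: k; exact: cvgr_lt SP _ e20.
have /andP[SQk _] : (hdist (S k) Q < e / 2) && (hdist Q (S k) < e / 2).
  by rewrite -gt_max; near: k; exact: cvgr_lt SQ _ e20.
have [s Sks xs] := hdist_lt KD PK (SK k) (S0 k) Px PSk.
have [y Qy sy] := hdist_lt KD (SK k) QK Q0 Sks SQk.
exists y; split => //; apply: xeU; rewrite ballEmdist /=.
by have := metric_triangle x s y; lra.
Unshelve. all: end_near.
Qed.

Lemma hausdorff_limit_unique D K (S : nat -> set X) P Q :
    diam_le D K -> (forall k, S k `<=` K) -> (forall k, S k !=set0) ->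
    P `<=` K -> Q `<=` K -> P !=set0 -> Q !=set0 -> closed P -> closed Q ->
    (fun k => hausdorff (S k) P) @ \oo --> 0 ->
    (fun k => hausdorff (S k) Q) @ \oo --> 0 ->
  P = Q.
Proof.
move=> KD SK S0 PK QK P0 Q0 Pcl Qcl SP SQ.
by apply/seteqP; split; exact: hausdorff_limit_sub KD SK S0 _ _ _ _ _ _.
Qed.

End MetricSets.

Section LipschitzConstant.
Context {R : realType} {X : metricType R}.
Implicit Types (g : X -> X) (L : R).

Lemma lipschitz_with_max0 L g :
  lipschitz_with L g -> lipschitz_with (Num.max L 0) g.
Proof.
move=> gL x y; apply: le_trans (gL x y) _.
by rewrite ler_wpM2r ?mdist_ge0 // le_max lexx.
Qed.

Lemma lip_const_ge0 g : 0 <= lip_const g.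
Proof.
rewrite /lip_const; set S := [set L | _].
have [->|/set0P S0] := eqVneq S set0; first by rewrite inf0.
by apply: lb_le_inf S0 _ => L [].
Qed.

Lemma lipschitz_lip_const L g :
  lipschitz_with L g -> lipschitz_with (lip_const g) g.
Proof.
move=> gL x y; have [xy0|xy_gt0] := leP (mdist x y) 0.
  have {}xy0 : mdist x y = 0 by apply/eqP; rewrite eq_le xy0 mdist_ge0.
  by have := lipschitz_with_max0 gL x y; rewrite xy0 !mulr0.
rewrite -ler_pdivrMr //; apply: lb_le_inf => [|M [_ gM]].
  exists (Num.max L 0); split; last exact: lipschitz_with_max0.
  by rewrite le_max lexx orbT.
by rewrite ler_pdivrMr.
Qed.

End LipschitzConstant.

Section BackwardTrajectory.
Context {R : realType} {X : metricType R}.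
Variables (n : nat -> nat) (f : nat -> nat -> X -> X).
Implicit Types (A B C : set X) (e : R).

Lemma LF_ge0 i : 0 <= LF n f i.
Proof.
rewrite /LF; elim/big_ind: _ => // [a b a0 _|r _]; last exact: lip_const_ge0.
by rewrite le_max a0.
Qed.

Lemma lipschitz_LF i r : (exists L, lipschitz_with L (f i r)) -> (r < n i)%N ->
  lipschitz_with (LF n f i) (f i r).
Proof.
move=> [L fL] ri x y; apply: le_trans (lipschitz_lip_const fL x y) _.
by rewrite ler_wpM2r ?mdist_ge0 // /LF (bigD1 (Ordinal ri)) //= le_max lexx.
Qed.

Lemma foldr_Fset_subset s A B :
  A `<=` B -> foldr (Fset n f) A s `<=` foldr (Fset n f) B s.
Proof.
move=> AB; elim: s => //= i s IH _ [r ri [a Aa <-]].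
by exists r => //; exists a => //; exact: IH.
Qed.

Lemma foldr_Fset_sub C s A : (forall i r, (r < n i)%N -> f i r @` C `<=` C) ->
  A `<=` C -> foldr (Fset n f) A s `<=` C.
Proof.
move=> fC AC; elim: s => //= i s IH _ [r ri [a Aa <-]].
by apply: fC ri _ _; exists a => //; exact: IH.
Qed.

Lemma foldr_Fset_neq0 s A : (forall i, (0 < n i)%N) ->
  A !=set0 -> foldr (Fset n f) A s !=set0.
Proof.
move=> n_gt0 A0; elim: s => //= i s [a Aa].
by exists (f i 0%N a), 0%N => //=; exists a.
Qed.

Lemma Psi_add k j A :
  Psi n f (k + j) A = Psi n f k (foldr (Fset n f) A (iota k j)).
Proof. by rewrite /Psi iotaD foldr_cat. Qed.

Hypothesis f_lip :
  forall i r, (r < n i)%N -> exists L : R, lipschitz_with L (f i r).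

Lemma within_Fset e i A B :
  within e A B -> within (LF n f i * e) (Fset n f i A) (Fset n f i B).
Proof.
move=> AB _ [r ri [a Aa <-]]; have [b Bb ab] := AB a Aa.
exists (f i r b); first by exists r => //; exists b.
apply: le_trans (lipschitz_LF (f_lip ri) ri a b) _.
by rewrite ler_wpM2l ?LF_ge0.
Qed.

Lemma within_foldr_Fset e s A B : within e A B ->
  within ((\prod_(i <- s) LF n f i) * e)
    (foldr (Fset n f) A s) (foldr (Fset n f) B s).
Proof.
move=> AB; elim: s => [|i s IH] /=; first by rewrite big_nil mul1r.
by rewrite big_cons -mulrA; exact: within_Fset.
Qed.

Lemma within_Psi e k A B : within e A B ->
  within ((\prod_(i < k) LF n f i) * e) (Psi n f k A) (Psi n f k B).
Proof.
by rewrite -(big_mkord xpredT) /index_iota subn0; exact: within_foldr_Fset.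
Qed.

End BackwardTrajectory.

Section Attractor.
Context {R : realType} {X : metricType R}.
Variables (n : nat -> nat) (f : nat -> nat -> X -> X).
Variables (C : set X) (D : R).
Hypotheses (n_gt0 : forall i, (0 < n i)%N)
  (f_lip : forall i r, (r < n i)%N -> exists L : R, lipschitz_with L (f i r))
  (LF_prod_cvg0 : (fun k => \prod_(i < k) LF n f i) @ \oo --> 0)
  (C_compact : compact C) (C_diam : diam_le D C)
  (fC : forall i r, (r < n i)%N -> f i r @` C `<=` C).
Implicit Types (A : set X).

Lemma Psi_sub k A : A `<=` C -> Psi n f k A `<=` C.
Proof. exact: foldr_Fset_sub. Qed.

Lemma Psi_neq0 k A : A !=set0 -> Psi n f k A !=set0.
Proof. exact: foldr_Fset_neq0. Qed.

Lemma Psi_C_nonincreasing k m : (k <= m)%N -> Psi n f m C `<=` Psi n f k C.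
Proof.
move=> km; rewrite -(subnKC km) Psi_add.
by apply: foldr_Fset_subset; exact: foldr_Fset_sub.
Qed.

Lemma within_Psi_diam k A B : A `<=` C -> B `<=` C -> B !=set0 ->
  within ((\prod_(i < k) LF n f i) * D) (Psi n f k A) (Psi n f k B).
Proof.
move=> AC BC [b Bb]; apply: (within_Psi f_lip) => a Aa.
by exists b => //; exact: C_diam (AC a Aa) (BC b Bb).
Qed.

Definition attractor := \bigcap_k closure (Psi n f k C).

Lemma attractor_sub : attractor `<=` C.
Proof.
have C_closed : closed C := compact_closed (@metric_hausdorff _ X) C_compact.
by move=> x /(_ 0%N I) /C_closed.
Qed.

Lemma attractor_compact : compact attractor.
Proof.
apply: subclosed_compact C_compact attractor_sub.
by apply: closed_bigI => k _; exact: closed_closure.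
Qed.

Lemma Psi_within_attractor k A : A `<=` C -> A !=set0 ->
  within ((\prod_(i < k) LF n f i) * D) (Psi n f k A) attractor.
Proof.
move=> AC A0 s Ps; have C0 : C !=set0 by case: A0 => a /AC; exists a.
have /choice[y yP] : forall j, exists y,
    Psi n f (k + j) C y /\ mdist s y <= (\prod_(i < k) LF n f i) * D.
  move=> j; rewrite Psi_add.
  have tailC := foldr_Fset_sub (s := iota k j) fC (@subset_refl _ C).
  have [y Py sy] := within_Psi_diam AC tailC (foldr_Fset_neq0 f _ n_gt0 C0) Ps.
  by exists y.
have yC : (y @ \oo) C.
  by rewrite /fmap /=; apply: filterE => j; exact: Psi_sub (yP j).1.
have [x [_ yx]] := C_compact _ yC.
exists x; last first.
  apply: cluster_mdist_le yx.
  by rewrite /fmap /=; apply: filterE => j; exact: (yP j).2.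
move=> i _; move: yx; rewrite clusterE => /(_ (Psi n f i C)); apply.
exists i => // j /= ij; apply: Psi_C_nonincreasing (yP j).1.
exact: leq_trans ij (leq_addl k j).
Qed.

Lemma attractor_within_Psi k A e : A `<=` C -> A !=set0 -> 0 < e ->
  within ((\prod_(i < k) LF n f i) * D + e) attractor (Psi n f k A).
Proof.
move=> AC A0 e0 x /(_ k I) /(_ _ (nbhsx_ballx x e e0))[s [Ps]].
rewrite ballEmdist /= => xs.
have [a Aa sa] := within_Psi_diam (@subset_refl _ C) AC A0 Ps.
by exists a => //; have := metric_triangle x s a; lra.
Qed.

Lemma hausdorff_Psi_attractor_le k A : A `<=` C -> A !=set0 ->
  hausdorff (Psi n f k A) attractor <= (\prod_(i < k) LF n f i) * D.
Proof.
move=> AC A0; apply: hausdorff_le (Psi_neq0 k A0) _ _ => d d0.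
  by apply: withinW (Psi_within_attractor AC A0); rewrite lerDl ltW.
exact: attractor_within_Psi.
Qed.

Lemma Psi_cvg_attractor A : A `<=` C -> A !=set0 ->
  cvg_H (fun k => Psi n f k A) attractor.
Proof.
move=> AC A0; have [s Ps] := Psi_neq0 0 A0.
have [x Px _] := Psi_within_attractor AC A0 Ps.
split; first by split; [exists x | exact: attractor_compact].
apply: (@squeeze_cvgr _ _ _ _ (cst 0) (fun k => (\prod_(i < k) LF n f i) * D)).
- apply: nearW => k.
  by rewrite hausdorff_ge0 hausdorff_Psi_attractor_le.
- exact: cvg_cst.
- by rewrite -(mul0r D); exact: cvgMl.
Qed.

End Attractor.

Theorem mainTheorem7 (R : realType) (X : metricType R)
  (n : nat -> nat) (f : nat -> nat -> X -> X) (C : set X) :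
  complete_space X ->
  (forall i, (0 < n i)%N) ->
  (forall i r, (r < n i)%N -> exists L : R, lipschitz_with L (f i r)) ->
  (fun k => \prod_(i < k) LF n f i) @ \oo --> (0 : R) ->
  compact C ->
  (forall i r, (r < n i)%N -> f i r @` C `<=` C) ->
  cvgn (series (fun k => \prod_(i < k.+1) LF n f i)) ->
  exists! P : set X,
    P `<=` C /\
    (forall A : set X, A !=set0 -> compact A -> A `<=` C ->
       cvg_H (fun k => Psi n f k A) P).
Proof.
move=> _ n_gt0 f_lip LF_cvg0 C_compact fC _.
have [D C_diam] := compact_diam_le C_compact.
have lim_attractor :=
  Psi_cvg_attractor n_gt0 f_lip LF_cvg0 C_compact C_diam fC.
have attractorC := attractor_sub (n := n) (f := f) C_compact.
exists (attractor n f C); split.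
  by split=> // A A0 _ AC; exact: lim_attractor.
move=> P [PC P_lim]; have [C_eq0|/set0P C0] := eqVneq C set0.
  by apply/seteqP; split=> x; [move/attractorC | move/PC]; rewrite C_eq0.
have [[P0 P_compact] CP] := P_lim C C0 C_compact (@subset_refl _ C).
have [[A0 A_compact] CA] := lim_attractor C (@subset_refl _ C) C0.
apply: (hausdorff_limit_unique C_diam _ _ attractorC PC A0 P0 _ _ CA CP).
- by move=> k; exact: Psi_sub.
- by move=> k; exact: Psi_neq0.
- exact: compact_closed (@metric_hausdorff _ X) A_compact.
- exact: compact_closed (@metric_hausdorff _ X) P_compact.
Qed.
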